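(* Given a time parameter $t$, there exists a deterministic neural network (of deterministic threshold gates) with one input neuron $x$, a vector $\bar y$ of $\log t$ output neurons, and $O(\log t)$ auxiliary neurons, such that within a time window of $t$ rounds, for every round $\tau$: if $x$ fired $r_\tau$ times in the last $\tau$ rounds, then the output $\bar y$ encodes (in binary) the number $r_\tau$ by round $\tau+\log r_\tau+1$.
   Context: A neural network consists of input neurons (no incoming edges), output neurons and auxiliary neurons, connected by directed weighted edges with weights $w(u,v)\in\mathbb{R}$ (self-loops allowed); every neuron $v$ has a threshold $b(v)\ge 0$ and is either excitatory (all outgoing weights $\ge0$) or inhibitory (all outgoing weights $\le 0$). The network evolves in discrete synchronous rounds; $u^\tau\in\{0,1\}$ indicates whether $u$ fires in round $\tau$, input firings are given externally, and a deterministic threshold gate $u$ fires in round $\tau$ iff $\sum_v w(v,u)\,v^{\tau-1}-b(u)\ge 0$. *)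

From HB Require Import structures.
From mathcomp Require Import all_boot all_order all_algebra.
From mathcomp Require Import reals.
Set Implicit Arguments. Unset Strict Implicit. Unset Printing Implicit Defensive.
Import Order.TTheory GRing.Theory Num.Theory.

(* Neurons of a network with one input neuron, k output neurons and
   m auxiliary neurons:  inl tt = the input x,
   inr (inl i) = output y_i,  inr (inr j) = auxiliary neuron j. *)
Definition neuron (k m : nat) : finType := (unit + ('I_k + 'I_m))%type.

Definition input_neuron (k m : nat) : neuron k m := inl tt.
Definition output_neuron (k m : nat) (i : 'I_k) : neuron k m := inr (inl i).

Record network (R : realType) (k m : nat) := Network {
  weight : neuron k m -> neuron k m -> R;
  thresh : neuron k m -> R;
  excitatory : neuron k m -> bool
}.

Definition wf_network (R : realType) (k m : nat) (N : network R k m) : Prop :=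
  (forall u, weight N u (input_neuron k m) = 0%R) /\
  (forall v, (0 <= thresh N v)%R) /\
  (forall u v, excitatory N u -> (0 <= weight N u v)%R) /\
  (forall u v, ~~ excitatory N u -> (weight N u v <= 0)%R).

Fixpoint fires (R : realType) (k m : nat) (N : network R k m)
    (inp : nat -> bool) (tau : nat) (v : neuron k m) : bool :=
  match tau with
  | 0 => false
  | tau'.+1 =>
      match v with
      | inl _ => inp tau
      | inr _ =>
          (0 <= (\sum_(u : neuron k m)
                   (if fires N inp tau' u then weight N u v else 0))
                - thresh N v)%R
      end
  end.

Definition input_count (inp : nat -> bool) (tau : nat) : nat :=
  \sum_(1 <= s < tau.+1) inp s.

Definition output_value (R : realType) (k m : nat) (N : network R k m)
    (inp : nat -> bool) (s : nat) : nat :=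
  \sum_(i < k) fires N inp s (output_neuron m i) * 2 ^ i.

From HB Require Import structures.
From mathcomp Require Import all_boot all_order all_algebra.
From mathcomp Require Import reals.
From mathcomp Require Import zify ring lra.

Set Implicit Arguments. Unset Strict Implicit. Unset Printing Implicit Defensive.
Import Order.TTheory GRing.Theory Num.Theory.

(* The network keeps a carry-save binary counter of the input spikes: digit j
   ranges over {0,1,2} and is held by threshold gates testing [digit >= 1] and
   [digit = 2].  In every round each digit equal to 2 hands a carry to the next
   position, so all digits are updated locally in one round, while the value
   sum_j digit_j 2^j is always exactly the number of spikes seen up to the
   previous round.  A second layer compares the value of digits 0..j with 2^j,
   2^(j+1) and 3 * 2^j; these three comparisons determine bit j of the count,
   which the output neuron y_j reads in the next round.  Hence the count is
   displayed two rounds after the last spike; counts at most 1 must appear after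
   one round, so y_0 also listens to the input directly while the count is 0. *)

Section CarrySaveCounter.

Variable inp : nat -> bool.

(* [fires] keeps every neuron silent in round 0, whatever [inp 0] says. *)
Definition input_at (s : nat) : bool := (s != 0) && inp s.

Fixpoint digit (s j : nat) : nat :=
  if s is s'.+1 then
    (digit s' j == 1) + (if j is j'.+1 then digit s' j' == 2 else input_at s')
  else 0.

Definition carry (s j : nat) : bool :=
  if j is j'.+1 then digit s j' == 2 else input_at s.

Definition counter_value (p s : nat) : nat := \sum_(j < p) digit s j * 2 ^ j.

Lemma digit_le2 s j : digit s j <= 2.
Proof.
case: s => //= s; case: (_ == 1); case: j => [|j] /=;
  by [case: (input_at _) | case: (_ == 2)].
Qed.

Lemma digitS s j : digit s.+1 j = (digit s j == 1) + carry s j.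
Proof. by case: j. Qed.

Lemma digit_ge1 s j : (1 <= digit s j) = (digit s j == 1) + (digit s j == 2) :> nat.
Proof. by have := digit_le2 s j; case: (digit s j) => [|[|[|]]]. Qed.

Lemma digit_ge2 s j : (2 <= digit s j) = (digit s j == 2).
Proof. by have := digit_le2 s j; case: (digit s j) => [|[|[|]]]. Qed.

Lemma counter_value0 p : counter_value p 0 = 0.
Proof. exact: big1. Qed.

Lemma counter_valueS p s :
  counter_value p s.+1 + 2 ^ p * carry s p = counter_value p s + input_at s.
Proof.
elim: p => [|p IHp]; first by rewrite /counter_value !big_ord0 mul1n.
rewrite /counter_value !big_ord_recr -/(counter_value p s.+1) -/(counter_value p s).
rewrite digitS /= expnS; have := digit_le2 s p; move: IHp.
by case: (digit s p) => [|[|[|]]] //= IHp _; lia.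
Qed.

Lemma input_countS s : input_count inp s.+1 = input_count inp s + inp s.+1.
Proof. by rewrite /input_count big_nat_recr. Qed.

Lemma input_count_le s : input_count inp s <= s.
Proof.
elim: s => [|s IHs]; first by rewrite /input_count big_geq.
by rewrite input_countS; case: (inp _); lia.
Qed.

Lemma counter_value_count p s :
  input_count inp s < 2 ^ p -> counter_value p s.+1 = input_count inp s.
Proof.
elim: s => [|s IHs] lt_count.
  have := counter_valueS p 0; rewrite counter_value0 /input_count big_geq //=; lia.
have := counter_valueS p s.+1; rewrite IHs /input_at /=; last first.
  by move: lt_count; rewrite input_countS; lia.
by move: lt_count; rewrite input_countS; case: (carry _ _) => /=; lia.
Qed.

Lemma counter_value_lt p s : counter_value p s + 2 <= 2 ^ p.+1.
Proof.
elim: p => [|p IHp]; first by rewrite /counter_value big_ord0.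
rewrite /counter_value big_ord_recr -/(counter_value p s) /= !expnS.
by have := digit_le2 s p; move: IHp; rewrite expnS; nia.
Qed.

Lemma counter_value_mod p q s : p <= q ->
  counter_value q s %% 2 ^ p = counter_value p s %% 2 ^ p.
Proof.
move=> /subnKC <-; elim: (q - p) => [|d IHd]; first by rewrite addn0.
rewrite addnS /counter_value big_ord_recr -/(counter_value (p + d) s) /=.
by rewrite expnD mulnA mulnAC addnC modnMDl IHd.
Qed.

End CarrySaveCounter.

Definition bit (i N : nat) : bool := 2 ^ i <= N %% 2 ^ i.+1.

Lemma bit0n i : bit i 0 = false.
Proof. by rewrite /bit mod0n leqn0 expn_eq0. Qed.

Lemma sum_bits N p : \sum_(i < p) bit i N * 2 ^ i = N %% 2 ^ p.
Proof.
elim: p => [|p IHp]; first by rewrite big_ord0 modn1.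
rewrite big_ord_recr /= IHp /bit.
have -> : N %% 2 ^ p = N %% 2 ^ p.+1 %% 2 ^ p by rewrite modn_dvdm // expnS dvdn_mull.
have := ltn_pmod N (expn_gt0 2 p.+1); rewrite expnS.
set r := N %% (2 * 2 ^ p); have := expn_gt0 2 p; set P := 2 ^ p => P_gt0 r_lt.
have [r_ltP | r_geP] := ltnP r P; first by rewrite modn_small //; lia.
have -> : r %% P = r - P.
  by rewrite -{1}(subnK r_geP) modnDr modn_small //; lia.
by rewrite /=; lia.
Qed.

Lemma bit_thresholds h T : 0 < h -> T < 4 * h ->
  (h <= T) + (3 * h <= T) = (2 * h <= T) + (h <= T %% (2 * h)).
Proof.
move=> h_gt0 T_lt; have [T_lt2h | T_ge2h] := ltnP T (2 * h).
  rewrite modn_small //; have -> : (3 * h <= T) = false by apply/negbTE; lia.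
  by rewrite addn0.
have -> : T %% (2 * h) = T - 2 * h.
  by rewrite -{1}(subnK T_ge2h) modnDr modn_small; lia.
have -> : (3 * h <= T) = (h <= T - 2 * h) by apply/idP/idP; lia.
have h_le_T : h <= T by lia.
by rewrite h_le_T.
Qed.

(* [DigitGe2Inh] duplicates [DigitGe2] because all outgoing weights of a neuron
   share one sign; [PrefixPos] is only read at position [k], where it tells
   whether the count is nonzero. *)
Inductive gate :=
  DigitGe1 | DigitGe2 | DigitGe2Inh | PrefixGe1 | PrefixGe2 | PrefixGe3 | PrefixPos.

Scheme Equality for gate.
HB.instance Definition _ := hasDecEq.Build gate (compareP gate_eq_dec).

Lemma gate_enumP : Finite.axiom
  [:: DigitGe1; DigitGe2; DigitGe2Inh; PrefixGe1; PrefixGe2; PrefixGe3; PrefixPos].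
Proof. by case. Qed.
HB.instance Definition _ := Finite.copy gate (fin_type gate_enumP).

Lemma card_gate : #|{: gate}| = 7.
Proof. by rewrite cardT enumT unlock. Qed.

Lemma sum_gate (V : nmodType) (F : gate -> V) :
  (\sum_g F g = F DigitGe1 + F DigitGe2 + F DigitGe2Inh
              + F PrefixGe1 + F PrefixGe2 + F PrefixGe3 + F PrefixPos)%R.
Proof. by rewrite /index_enum !unlock /= addr0 !addrA. Qed.

Definition reads_digit (g : gate) : bool :=
  if g is (DigitGe1 | DigitGe2 | DigitGe2Inh) then true else false.

Definition gate_excitatory (g : gate) : bool :=
  if g is (DigitGe2Inh | PrefixGe2 | PrefixPos) then false else true.

Definition gate_threshold (g : gate) (j : nat) : nat :=
  match g with
  | DigitGe1 | PrefixPos => 1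
  | DigitGe2 | DigitGe2Inh => 2
  | PrefixGe1 => 2 ^ j
  | PrefixGe2 => 2 ^ j.+1
  | PrefixGe3 => 3 * 2 ^ j
  end.

Definition gate_value (inp : nat -> bool) (s : nat) (g : gate) (j : nat) : nat :=
  if reads_digit g then digit inp s j else counter_value inp j.+1 s.

Definition gate_fires (inp : nat -> bool) (s : nat) (g : gate) (j : nat) : bool :=
  gate_threshold g j <= gate_value inp s g j.

Lemma gate_fires0 inp g j : gate_fires inp 0 g j = false.
Proof.
rewrite /gate_fires /gate_value.
by case: g; rewrite /= ?counter_value0 // leqn0 ?muln_eq0 expn_eq0.
Qed.

Lemma fires_input (R : realType) k m (N : network R k m) inp s :
  fires N inp s (input_neuron k m) = input_at inp s.
Proof. by case: s. Qed.

Lemma sum_unit (V : nmodType) (F : unit -> V) : (\sum_u F u = F tt)%R.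
Proof. by rewrite /index_enum !unlock /= addr0. Qed.

Section CounterNetwork.

Variables (R : realType) (k : nat).

Local Open Scope ring_scope.

Local Notation n := k.+1.
Local Notation aux := (gate * 'I_n)%type.
Local Notation m := #|{: aux}|.
Local Notation node := (neuron k m).

Lemma threshold_case (x z b nz : bool) :
  (0 <= (x && z)%:R + 2 * b%:R - (z && nz)%:R - 1 :> R)
  = if z && ~~ nz then x || b else b.
Proof.
by case: x; case: z; case: b; case: nz => /=;
  first [apply/idP; lra | apply/negbTE; rewrite -ltNge; lra].
Qed.

Definition aux_neuron (p : aux) : node := inr (inr (enum_rank p)).

Definition from_sources (w : option aux -> R) (u : node) : R :=
  match u with
  | inl _ => w None
  | inr (inl _) => 0
  | inr (inr a) => w (Some (enum_val a))
  end.

(* Weights from auxiliary neurons are written as a coefficient times an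
   indicator of the source position, the shape expected by [sum_fires_delta]. *)
Definition digit_weight (j : nat) (q : option aux) : R :=
  match q with
  | None => (j == 0)%:R
  | Some (DigitGe1, i) => 1 * (i == j :> nat)%:R
  | Some (DigitGe2, i) => 1 * (i.+1 == j)%:R
  | Some (DigitGe2Inh, i) => -1 * (i == j :> nat)%:R
  | Some _ => 0
  end.

Definition prefix_weight (L : nat) (q : option aux) : R :=
  \sum_(j < L.+1) 2 ^+ j * digit_weight j q.

Definition output_weight (i : nat) (q : option aux) : R :=
  match q with
  | None => (i == 0)%:R
  | Some (PrefixGe1, j) | Some (PrefixGe3, j) => 2 * (j == i :> nat)%:R
  | Some (PrefixGe2, j) => -2 * (j == i :> nat)%:R
  | Some (PrefixPos, j) => - (i == 0)%:R * (j == k :> nat)%:R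
  | Some _ => 0
  end.

Definition gate_weight (g : gate) : nat -> option aux -> R :=
  if reads_digit g then digit_weight else prefix_weight.

Definition counter_net : network R k m :=
  Network
    (fun u v => match v with
       | inl _ => 0
       | inr (inl i) => from_sources (output_weight i) u
       | inr (inr a) => from_sources (gate_weight (enum_val a).1 (enum_val a).2) u
       end)
    (fun v => match v with
       | inl _ => 0
       | inr (inl _) => 1
       | inr (inr a) => (gate_threshold (enum_val a).1 (enum_val a).2)%:R
       end)
    (fun u => if u is inr (inr a) then gate_excitatory (enum_val a).1 else true).

Definition source_excitatory (q : option aux) : bool :=
  if q is Some p then gate_excitatory p.1 else true.

Definition sign_ok (e : bool) (x : R) : Prop := if e then 0 <= x else x <= 0.

Lemma digit_weight_sign j q : sign_ok (source_excitatory q) (digit_weight j q).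
Proof.
by case: q => [[[] i]|]; rewrite /sign_ok /= ?lexx ?mul1r ?mulN1r ?oppr_le0 ?ler0n.
Qed.

Lemma prefix_weight_sign L q : sign_ok (source_excitatory q) (prefix_weight L q).
Proof.
rewrite /sign_ok /prefix_weight; have := digit_weight_sign ^~ q; rewrite /sign_ok.
case: (source_excitatory q) => sgn.
  by apply: sumr_ge0 => j _; rewrite mulr_ge0 ?exprn_ge0 ?(sgn j).
by apply: sumr_le0 => j _; rewrite mulr_ge0_le0 ?exprn_ge0 ?(sgn j).
Qed.

Lemma output_weight_sign i q : sign_ok (source_excitatory q) (output_weight i q).
Proof.
by case: q => [[[] j]|]; rewrite /sign_ok /= ?lexx ?mulNr ?oppr_le0 ?mulr_ge0 ?ler0n.
Qed.

Lemma from_sources_sign w : (forall q, sign_ok (source_excitatory q) (w q)) ->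
  forall u, sign_ok (excitatory counter_net u) (from_sources w u).
Proof.
move=> w_sign [[]|[i|a]]; [exact: (w_sign None) | exact: lexx | exact: (w_sign (Some _))].
Qed.

Lemma counter_net_wf : wf_network counter_net.
Proof.
have sign u v : sign_ok (excitatory counter_net u) (weight counter_net u v).
  case: v => [[]|[i|a]]; first by rewrite /sign_ok; case: (excitatory counter_net u).
    exact/from_sources_sign/output_weight_sign.
  apply: from_sources_sign => q; rewrite /gate_weight.
  by case: (reads_digit _); [apply: digit_weight_sign | apply: prefix_weight_sign].
split; first by [].
split; first by case=> [[]|[i|a]] /=; rewrite ?lexx ?ler01 ?ler0n.
by split=> u v; have := sign u v; rewrite /sign_ok => + e_u; rewrite ?e_u ?(negbTE e_u).
Qed.

Variable inp : nat -> bool.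

Lemma sum_aux (F : aux -> R) : \sum_p F p = \sum_g \sum_(j < n) F (g, j).
Proof. by rewrite pair_big; apply: eq_bigr => -[]. Qed.

Lemma sum_from_sources (N : network R k m) s w :
  \sum_u (if fires N inp s u then from_sources w u else 0)
  = (input_at inp s)%:R * w None
    + \sum_p (fires N inp s (aux_neuron p))%:R * w (Some p).
Proof.
rewrite !big_sumType sum_unit /= fires_input.
rewrite [X in _ + (X + _)]big1 ?add0r => [|i _]; last by case: ifP.
congr (_ + _); first by case: (input_at inp s); rewrite ?mul1r ?mul0r.
rewrite (big_enum_val (A := {: aux})) /=; apply: eq_bigr => a _.
by rewrite /aux_neuron enum_valK; case: (fires _ _ _ _); rewrite ?mul1r ?mul0r.
Qed.

Definition potential (s : nat) (w : option aux -> R) : R :=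
  (input_at inp s)%:R * w None
  + \sum_(p : aux) (gate_fires inp s p.1 p.2)%:R * w (Some p).

Lemma potential_sum s L (c : 'I_L -> R) (w : 'I_L -> option aux -> R) :
  potential s (fun q => \sum_(j < L) c j * w j q)
  = \sum_(j < L) c j * potential s (w j).
Proof.
rewrite /potential mulr_sumr; under [X in _ + X]eq_bigr do rewrite mulr_sumr.
rewrite exchange_big -big_split /=; apply: eq_bigr => j _.
by rewrite mulrDr mulr_sumr mulrCA; congr (_ + _); apply: eq_bigr => p _; rewrite mulrCA.
Qed.

Lemma sum_fires_delta s g (c : R) i : (i < n)%N ->
  \sum_(j < n) (gate_fires inp s g j)%:R * (c * (j == i :> nat)%:R)
  = c * (gate_fires inp s g i)%:R.
Proof.
move=> lt_in; rewrite (bigD1 (Ordinal lt_in)) //= eqxx mulr1 mulrC big1 ?addr0 // => j.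
by rewrite -val_eqE => /negbTE /= ->; rewrite !mulr0.
Qed.

Lemma sum_mul0 (I : finType) (F : I -> R) : \sum_i F i * 0 = 0.
Proof. by apply: big1 => i _; rewrite mulr0. Qed.

Lemma potential_digit s j : (j < n)%N ->
  potential s (digit_weight j) = (digit inp s.+1 j)%:R.
Proof.
move=> lt_jn; rewrite digitS natrD /potential sum_aux sum_gate /= !sum_mul0 !addr0.
rewrite !sum_fires_delta //; case: j lt_jn => [|j] lt_jn.
  rewrite /= mulr0 sum_mul0 /gate_fires /gate_value /= digit_ge2 digit_ge1 natrD.
  by ring.
under eq_bigr do rewrite eqSS.
rewrite sum_fires_delta 1?ltnW // /gate_fires /gate_value /= !digit_ge2 digit_ge1 natrD.
by ring.
Qed.

Lemma potential_prefix s L : (L < n)%N ->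
  potential s (prefix_weight L) = (counter_value inp L.+1 s.+1)%:R.
Proof.
move=> lt_Ln; rewrite potential_sum /counter_value natr_sum; apply: eq_bigr => j _.
by rewrite potential_digit ?natrM ?natrX 1?mulrC // (leq_trans (ltn_ord j)).
Qed.

Lemma potential_gate s g (j : 'I_n) :
  potential s (gate_weight g j) = (gate_value inp s.+1 g j)%:R.
Proof.
rewrite /gate_weight /gate_value; case: (reads_digit g).
  exact: potential_digit.
exact: potential_prefix.
Qed.

Lemma potential_output s i : (i < k)%N ->
  potential s (output_weight i)
  = (input_at inp s && (i == 0))%:R + 2 * (gate_fires inp s PrefixGe1 i)%:R
    - 2 * (gate_fires inp s PrefixGe2 i)%:R + 2 * (gate_fires inp s PrefixGe3 i)%:R
    - ((i == 0) && gate_fires inp s PrefixPos k)%:R.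
Proof.
move=> lt_ik; have lt_in : (i < n)%N by apply: ltnW.
rewrite /potential sum_aux sum_gate /= !sum_mul0 !add0r !sum_fires_delta //.
by case: (i == 0); case: (input_at inp s); case: (gate_fires _ _ PrefixPos k) => /=; ring.
Qed.

Lemma fires_aux_neuron s p :
  fires counter_net inp s (aux_neuron p) = gate_fires inp s p.1 p.2.
Proof.
elim: s p => [|s IHs] [g j]; first by rewrite /= gate_fires0.
rewrite /= sum_from_sources enum_rankK.
under eq_bigr do rewrite IHs.
by rewrite -/(potential s _) potential_gate subr_ge0 ler_nat.
Qed.

Lemma fires_output s (i : 'I_k) :
  fires counter_net inp s.+1 (output_neuron m i)
  = (0 <= potential s (output_weight i) - 1).
Proof. by rewrite /= sum_from_sources; under eq_bigr do rewrite fires_aux_neuron. Qed.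

Lemma fires_output_bit s (i : 'I_k) :
  let V := counter_value inp n s in
  fires counter_net inp s.+1 (output_neuron m i)
  = if (i == 0 :> nat) && (V == 0)%N then input_at inp s else bit i V.
Proof.
move=> V; rewrite fires_output potential_output // /gate_fires /gate_value /= -/V.
set T := counter_value inp i.+1 s.
have T_lt : (T < 4 * 2 ^ i)%N.
  by have := counter_value_lt inp i.+1 s; rewrite -/T !expnS; lia.
have T_mod : (T %% 2 ^ i.+1 = V %% 2 ^ i.+1)%N.
  by rewrite /V counter_value_mod // ltnS ltnW.
have bitV : (2 ^ i <= T)%N%:R + (3 * 2 ^ i <= T)%N%:R
            = (2 ^ i.+1 <= T)%N%:R + (bit i V)%:R :> R.
  by rewrite -!natrD bit_thresholds ?expn_gt0 // /bit -T_mod expnS.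
transitivity (0 <= (input_at inp s && (i == 0 :> nat))%:R + 2 * (bit i V)%:R
                  - ((i == 0 :> nat) && (0 < V)%N)%:R - 1 :> R).
  by congr (0 <= _); lra.
rewrite threshold_case -eqn0Ngt andbC.
by case: (i == 0 :> nat); case: eqP => //= ->; rewrite bit0n orbF.
Qed.

Lemma output_value_next s : (0 < k)%N -> (counter_value inp n s < 2 ^ k)%N ->
  output_value counter_net inp s.+1
  = if counter_value inp n s == 0%N then nat_of_bool (input_at inp s)
    else counter_value inp n s.
Proof.
move=> k_gt0 V_lt; rewrite /output_value; under eq_bigr do rewrite fires_output_bit.
case: eqP => [-> | _] /=.
  rewrite (bigD1 (Ordinal k_gt0)) //= muln1 big1 ?addn0 // => i.
  by rewrite -val_eqE /= bit0n => /negbTE ->.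
under eq_bigr do rewrite andbF.
by rewrite sum_bits modn_small.
Qed.

Lemma output_value_count tau : (0 < k)%N -> (0 < input_count inp tau < 2 ^ k)%N ->
  output_value counter_net inp tau.+2 = input_count inp tau.
Proof.
move=> k_gt0 /andP[count_gt0 count_lt].
have count_value : counter_value inp n tau.+1 = input_count inp tau.
  by apply: counter_value_count; rewrite expnS; lia.
by rewrite output_value_next ?count_value ?gtn_eqF.
Qed.

Lemma output_value_count_le1 tau : (0 < k)%N -> (input_count inp tau.+1 <= 1)%N ->
  output_value counter_net inp tau.+2 = input_count inp tau.+1.
Proof.
move=> k_gt0; rewrite input_countS => count_le1.
have two_le : (2 ^ 1 <= 2 ^ k)%N by rewrite leq_exp2l.
have count_value : counter_value inp n tau.+1 = input_count inp tau.
  by apply: counter_value_count; rewrite expnS; lia.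
rewrite output_value_next ?count_value /=; try lia.
by case: eqP => [-> | ] //; move: count_le1; case: (inp tau.+1); lia.
Qed.

End CounterNetwork.

Theorem lemma1 (R : realType) :
  exists c : nat, forall t : nat, 1 <= t ->
    let k := up_log 2 t.+1 in
    exists m : nat, m <= c * k /\
    exists N : network R k m, wf_network N /\
      forall (inp : nat -> bool) (tau : nat), 1 <= tau <= t ->
        let r := input_count inp tau in
        exists s : nat, tau <= s <= tau + up_log 2 r + 1 /\
          output_value N inp s = r.
Proof.
exists 14 => t t_gt0 k.
have k_gt0 : 0 < k by rewrite up_log_gt0.
have t_lt : t < 2 ^ k by apply: up_logP.
exists #|{: gate * 'I_k.+1}|; split; first by rewrite card_prod card_gate card_ord; lia.
exists (counter_net R k); split; first exact: counter_net_wf.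
move=> inp tau /andP[tau_gt0 tau_le] r.
have r_le : r <= tau by apply: input_count_le.
have [r_gt1 | r_le1] := ltnP 1 r.
  exists tau.+2; rewrite output_value_count //; last by apply/andP; split; lia.
  by split=> //; have := up_log_gt0 2 r; rewrite r_gt1 /=; lia.
case: tau tau_gt0 tau_le @r r_le r_le1 => // tau _ tau_le r r_le r_le1.
by exists tau.+2; rewrite output_value_count_le1 //; split=> //; lia.
Qed.
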